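(* Assume Hypotheses 1, 2 and 3 (see context). For any $x\in\Gamma$ and any $\mathbf{x}\in\mathcal{C}(\mathbf{0})$, $$\|\Pi(Q(t,x)\mathbf{x})\|\ge\|\Pi(\mathbf{x})\|\exp\Big(\int_0^t\big(\alpha(\Phi(s,x))-\|D_zf(\Phi(s,x))\|\big)\,ds\Big)\quad\text{for all }t\ge0.$$
   Context: System $\dot x=F(x)$ with $F=(f,g)$, i.e. $\dot a=f(a,z)$, $\dot z=g(a,z)$, $(a,z)\in\mathbb{R}^n\times\mathbb{R}^m$, $X=\mathbb{R}^n\times\mathbb{R}^m$, flow $\Phi(t,x)$. Euclidean inner product, norm, operator norm. $\mathcal{L}(x_1,x_2)=\|a_2-a_1\|^2-\|z_2-z_1\|^2$, $\mathcal{C}(x)=\{x'\in X:\mathcal{L}(x',x)\ge0\}$, $\mathbf{0}$ the zero vector of $X$; $\Pi(a,z)=a$, $\Pi_\perp(a,z)=z$; $\mathbb{B}_d(x)=\{(a',z'):\|a'-a\|\le d,\|z'-z\|\le d\}$. $\Gamma\subseteq U$ positively invariant means $\Phi(t,x)$ is defined for all $t\ge0$ for $x\in\Gamma$ and $\Phi(t,\Gamma)\subseteq\Gamma$. Hypothesis 1: $U$ open and convex, and there is $d>0$ with $\mathcal{C}(x)\cap U\subset\mathbb{B}_d(x)$ for all $x\in U$. Hypothesis 2: $f,g$ are $C^1$ on $U$; there exist continuous $\alpha>0$, $\ell\ge0$ on $U$ and $c_1>0$ with, for all $x\in U$: $\langle a',D_af(x)a'\rangle\ge\alpha(x)\|a'\|^2$;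 $\langle z',D_zg(x)z'\rangle\le\ell(x)\|z'\|^2$; $\alpha(x)\ge\ell(x)+\|D_zf(x)\|+\|D_ag(x)\|+c_1$. Hypothesis 3: $\Gamma\subset U$ is positively invariant and $\Pi_\perp(\Gamma)=\Pi_\perp(U)$. For $x\in\Gamma$, $Q(t,x)$ ($t\ge0$) denotes the fundamental matrix solution of the variational equation $\dot{\mathbf{x}}=DF(\Phi(t,x))\mathbf{x}$ with $Q(0,x)=I$. *)

From Stdlib Require Import Reals ClassicalEpsilon.
From Stdlib Require Vectors.Fin.
Open Scope R_scope.

Definition vec (k : nat) := Fin.t k -> R.

Fixpoint fsum (k : nat) : (Fin.t k -> R) -> R :=
  match k return (Fin.t k -> R) -> R with
  | O => fun _ => 0
  | S k' => fun u => u Fin.F1 + fsum k' (fun i => u (Fin.FS i))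
  end.

Definition dot {k} (u v : vec k) : R := fsum k (fun i => u i * v i).
Definition norm {k} (u : vec k) : R := sqrt (dot u u).
Definition vadd {k} (u v : vec k) : vec k := fun i => u i + v i.
Definition vsub {k} (u v : vec k) : vec k := fun i => u i - v i.
Definition vscal {k} (c : R) (u : vec k) : vec k := fun i => c * u i.
Definition vzero {k} : vec k := fun _ => 0.

Definition mat (p q : nat) := Fin.t p -> Fin.t q -> R.
Definition mvmul {p q} (A : mat p q) (v : vec q) : vec p :=
  fun i => fsum q (fun j => A i j * v j).

Definition opnorm {p q} (A : mat p q) : R :=
  epsilon (inhabits 0)
    (fun c => is_lub (fun r => exists v : vec q, norm v <= 1 /\ r = norm (mvmul A v)) c).

Definition pt (n m : nat) := (vec n * vec m)%type.
Definition Pi {n m} (x : pt n m) : vec n := fst x.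
Definition Piperp {n m} (x : pt n m) : vec m := snd x.
Definition ptzero {n m} : pt n m := (vzero, vzero).
Definition ptadd {n m} (x y : pt n m) : pt n m := (vadd (fst x) (fst y), vadd (snd x) (snd y)).
Definition ptsub {n m} (x y : pt n m) : pt n m := (vsub (fst x) (fst y), vsub (snd x) (snd y)).
Definition ptscal {n m} (c : R) (x : pt n m) : pt n m := (vscal c (fst x), vscal c (snd x)).
Definition ptnorm {n m} (x : pt n m) : R := sqrt (dot (fst x) (fst x) + dot (snd x) (snd x)).

Definition Lf {n m} (x1 x2 : pt n m) : R :=
  (norm (vsub (fst x2) (fst x1)))^2 - (norm (vsub (snd x2) (snd x1)))^2.
Definition Cone {n m} (x : pt n m) (x' : pt n m) : Prop := Lf x' x >= 0.
Definition Ball {n m} (d : R) (x : pt n m) (x' : pt n m) : Prop :=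
  norm (vsub (fst x') (fst x)) <= d /\ norm (vsub (snd x') (snd x)) <= d.

Definition X_open {n m} (U : pt n m -> Prop) : Prop :=
  forall x, U x -> exists r, 0 < r /\ forall y, ptnorm (ptsub y x) < r -> U y.
Definition X_convex {n m} (U : pt n m -> Prop) : Prop :=
  forall x y (l : R), 0 <= l <= 1 -> U x -> U y ->
    U (ptadd (ptscal l x) (ptscal (1 - l) y)).

Definition cont_on {n m} (U : pt n m -> Prop) (phi : pt n m -> R) : Prop :=
  forall x, U x -> forall eps, 0 < eps ->
    exists del, 0 < del /\ forall y, U y -> ptnorm (ptsub y x) < del ->
      Rabs (phi y - phi x) < eps.

Definition Fld {n m} (f : pt n m -> vec n) (g : pt n m -> vec m) (x : pt n m) : pt n m :=
  (f x, g x).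
Definition DF {n m} (Daf : pt n m -> mat n n) (Dzf : pt n m -> mat n m)
  (Dag : pt n m -> mat m n) (Dzg : pt n m -> mat m m) (x : pt n m) (h : pt n m) : pt n m :=
  (vadd (mvmul (Daf x) (fst h)) (mvmul (Dzf x) (snd h)),
   vadd (mvmul (Dag x) (fst h)) (mvmul (Dzg x) (snd h))).

Definition frechet_at {n m} (f : pt n m -> vec n) (g : pt n m -> vec m)
  Daf Dzf Dag Dzg (x : pt n m) : Prop :=
  forall eps, 0 < eps -> exists del, 0 < del /\ forall h : pt n m, ptnorm h < del ->
    ptnorm (ptsub (ptsub (Fld f g (ptadd x h)) (Fld f g x)) (DF Daf Dzf Dag Dzg x h))
      <= eps * ptnorm h.

Definition C1_on {n m} (U : pt n m -> Prop) (f : pt n m -> vec n) (g : pt n m -> vec m)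
  (Daf : pt n m -> mat n n) (Dzf : pt n m -> mat n m)
  (Dag : pt n m -> mat m n) (Dzg : pt n m -> mat m m) : Prop :=
  (forall x, U x -> frechet_at f g Daf Dzf Dag Dzg x) /\
  (forall i j, cont_on U (fun x => Daf x i j)) /\
  (forall i j, cont_on U (fun x => Dzf x i j)) /\
  (forall i j, cont_on U (fun x => Dag x i j)) /\
  (forall i j, cont_on U (fun x => Dzg x i j)).

(* y : [0,oo) -> X solves y'(t) = V(t, y(t)) for t >= 0: continuous on [0,oo)
   and differentiable with the prescribed derivative for t > 0 (componentwise). *)
Definition solves_pos {n m} (y : R -> pt n m) (V : R -> pt n m -> pt n m) : Prop :=
  (forall (i : Fin.t n) t, 0 <= t -> forall eps, 0 < eps -> exists del, 0 < del /\
     forall s, 0 <= s -> Rabs (s - t) < del -> Rabs (fst (y s) i - fst (y t) i) < eps) /\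
  (forall (i : Fin.t m) t, 0 <= t -> forall eps, 0 < eps -> exists del, 0 < del /\
     forall s, 0 <= s -> Rabs (s - t) < del -> Rabs (snd (y s) i - snd (y t) i) < eps) /\
  (forall (i : Fin.t n) t, 0 < t ->
     derivable_pt_lim (fun s => fst (y s) i) t (fst (V t (y t)) i)) /\
  (forall (i : Fin.t m) t, 0 < t ->
     derivable_pt_lim (fun s => snd (y s) i) t (snd (V t (y t)) i)).

From Stdlib Require Import Reals Lra Psatz ClassicalEpsilon.
Open Scope R_scope.

(* Write Q(s,x)v = (a(s), z(s)).  Along s |-> Phi(s,x) this pair solves the
   linear system a' = A a + B z, z' = C a + D z with A = D_a f, B = D_z f,
   C = D_a g, D = D_z g, and Hypothesis 2 gives <a,Aa> >= alpha |a|^2,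
   <z,Dz> <= ell |z|^2 and alpha >= ell + ||B|| + ||C||.  By Cauchy-Schwarz
   (1) (|a|^2 - |z|^2)' >= (||B|| + ||C|| + 2 ell) (|a|^2 - |z|^2), so by a
       Gronwall inequality the cone |z| <= |a| is forward invariant;
   (2) inside the cone (|a|^2)' >= 2 (alpha - ||B||) |a|^2, and Gronwall again
       gives |a(t)|^2 >= |a(0)|^2 exp (2 int_0^t (alpha - ||B||)). *)

Lemma fsum_ext k (u w : Fin.t k -> R) : (forall i, u i = w i) -> fsum k u = fsum k w.
Proof.
  induction k; simpl; intros H; [reflexivity|].
  rewrite H; f_equal; apply IHk; intros; apply H.
Qed.

Lemma fsum_add k (u w : Fin.t k -> R) : fsum k (fun i => u i + w i) = fsum k u + fsum k w.
Proof. induction k; simpl; [lra|]. rewrite IHk. lra. Qed.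

Lemma fsum_scal k c (u : Fin.t k -> R) : fsum k (fun i => c * u i) = c * fsum k u.
Proof. induction k; simpl; [lra|]. rewrite IHk. lra. Qed.

Lemma fsum_zero k : fsum k (fun _ => 0) = 0.
Proof. induction k; simpl; [reflexivity|]. rewrite IHk; lra. Qed.

Lemma fsum_le k (u w : Fin.t k -> R) : (forall i, u i <= w i) -> fsum k u <= fsum k w.
Proof.
  induction k; simpl; intros H; [lra|].
  specialize (IHk (fun i => u (Fin.FS i)) (fun i => w (Fin.FS i)) (fun i => H _)).
  specialize (H Fin.F1). lra.
Qed.

Lemma fsum_const_le k (u : Fin.t k -> R) c : (forall i, u i <= c) -> fsum k u <= INR k * c.
Proof.
  induction k; intros H; cbn [fsum]; [simpl; lra|].
  specialize (IHk (fun i => u (Fin.FS i)) (fun i => H _)).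
  specialize (H Fin.F1). rewrite S_INR. lra.
Qed.

Lemma fsum_nonneg k (u : Fin.t k -> R) : (forall i, 0 <= u i) -> 0 <= fsum k u.
Proof. intros H. rewrite <- (fsum_zero k). apply fsum_le; auto. Qed.

Lemma dot_nonneg {k} (u : vec k) : 0 <= dot u u.
Proof. apply fsum_nonneg. intros; nra. Qed.

Lemma dot_ext {k} (u u' w w' : vec k) :
  (forall i, u i = u' i) -> (forall i, w i = w' i) -> dot u w = dot u' w'.
Proof. intros H1 H2; apply fsum_ext; intros; rewrite H1, H2; reflexivity. Qed.

Lemma dot_add_r {k} (u w1 w2 : vec k) : dot u (vadd w1 w2) = dot u w1 + dot u w2.
Proof. unfold dot, vadd. rewrite <- fsum_add. apply fsum_ext; intros; ring. Qed.

Lemma norm_nonneg {k} (u : vec k) : 0 <= norm u.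
Proof. apply sqrt_pos. Qed.

Lemma norm_sq {k} (u : vec k) : norm u ^ 2 = dot u u.
Proof. unfold norm. simpl. rewrite Rmult_1_r. apply sqrt_sqrt, dot_nonneg. Qed.

Lemma norm_ext {k} (u w : vec k) : (forall i, u i = w i) -> norm u = norm w.
Proof. intros H; unfold norm; f_equal; apply dot_ext; auto. Qed.

Lemma norm_zero {k} : norm (@vzero k) = 0.
Proof.
  unfold norm. replace (dot (@vzero k) vzero) with 0; [apply sqrt_0|].
  rewrite <- (fsum_zero k). apply fsum_ext; intros; unfold vzero; ring.
Qed.

Lemma norm_scal {k} c (u : vec k) : norm (vscal c u) = Rabs c * norm u.
Proof.
  unfold norm. replace (dot (vscal c u) (vscal c u)) with (c * c * dot u u).
  - rewrite sqrt_mult by (nra || apply dot_nonneg). f_equal.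
    rewrite <- sqrt_Rsqr_abs. reflexivity.
  - unfold dot, vscal. rewrite <- fsum_scal. apply fsum_ext; intros; ring.
Qed.

Lemma norm_zero_sub {k} (u : vec k) : norm (vsub vzero u) = norm u.
Proof. unfold norm; f_equal; apply fsum_ext; intros; unfold vsub, vzero; ring. Qed.

(* A quadratic polynomial A - 2 l B + l^2 C that is nonnegative for all l has
   nonpositive discriminant; this is the core of Cauchy-Schwarz. *)
Lemma quad_discriminant A B C :
  0 <= C -> (forall l, 0 <= A - 2 * l * B + l * l * C) -> B * B <= A * C.
Proof.
  intros HC0 H. destruct (Req_dec C 0) as [HC|HC].
  - subst C. destruct (Req_dec B 0); [subst; specialize (H 0); nra|].
    specialize (H ((A + 1) / (2 * B))).
    assert (2 * ((A + 1) / (2 * B)) * B = A + 1) by (field; auto). nra.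
  - specialize (H (B / C)).
    replace (A - 2 * (B / C) * B + B / C * (B / C) * C) with ((A * C - B * B) / C) in H
      by (field; lra).
    apply Rmult_le_compat_r with (r := C) in H; [|lra].
    unfold Rdiv in H. rewrite Rmult_assoc, Rinv_l in H; lra.
Qed.

Lemma cauchy_schwarz_sq {k} (u w : vec k) : dot u w * dot u w <= dot u u * dot w w.
Proof.
  apply quad_discriminant; [apply dot_nonneg|]. intros l.
  replace (dot u u - 2 * l * dot u w + l * l * dot w w)
    with (dot (vsub u (vscal l w)) (vsub u (vscal l w))); [apply dot_nonneg|].
  transitivity (fsum k (fun i => u i * u i + (- (2 * l) * (u i * w i) + l * l * (w i * w i)))).
  - unfold dot, vsub, vscal. apply fsum_ext; intros; ring.
  - rewrite !fsum_add, !fsum_scal. unfold dot. ring.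
Qed.

Lemma cauchy_schwarz {k} (u w : vec k) : Rabs (dot u w) <= norm u * norm w.
Proof.
  unfold norm. rewrite <- sqrt_mult by apply dot_nonneg.
  rewrite <- sqrt_Rsqr_abs. apply sqrt_le_1_alt, cauchy_schwarz_sq.
Qed.

Lemma norm_triangle {k} (u w : vec k) : norm (vadd u w) <= norm u + norm w.
Proof.
  pose proof (cauchy_schwarz u w). pose proof (Rle_abs (dot u w)).
  pose proof (norm_nonneg u). pose proof (norm_nonneg w).
  apply Rsqr_incr_0_var; [|lra]. unfold Rsqr.
  replace (norm (vadd u w) * norm (vadd u w)) with (dot u u + 2 * dot u w + dot w w).
  - rewrite <- (norm_sq u), <- (norm_sq w). nra.
  - replace (norm (vadd u w) * norm (vadd u w)) with (norm (vadd u w) ^ 2) by ring.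
    rewrite norm_sq. unfold dot, vadd. rewrite <- fsum_scal, <- !fsum_add.
    apply fsum_ext; intros; ring.
Qed.

(* The Frobenius norm squared bounds the operator norm; it makes the set
   defining [opnorm] bounded and controls ||A|| - ||B|| by the entries of A - B. *)
Definition frob {p q} (A : mat p q) : R := fsum p (fun i => dot (A i) (A i)).

Lemma frob_nonneg {p q} (A : mat p q) : 0 <= frob A.
Proof. apply fsum_nonneg; intros; apply dot_nonneg. Qed.

Lemma norm_mvmul_frob {p q} (A : mat p q) v : norm (mvmul A v) <= sqrt (frob A) * norm v.
Proof.
  unfold norm. rewrite <- sqrt_mult by (apply frob_nonneg || apply dot_nonneg).
  apply sqrt_le_1_alt. unfold frob. rewrite (Rmult_comm (fsum _ _)), <- fsum_scal.
  apply fsum_le. intros i. rewrite (Rmult_comm (dot v v)). apply cauchy_schwarz_sq.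
Qed.

Lemma mvmul_scal {p q} (A : mat p q) c v i : mvmul A (vscal c v) i = c * mvmul A v i.
Proof. unfold mvmul, vscal. rewrite <- fsum_scal. apply fsum_ext; intros; ring. Qed.

Definition op_values {p q} (A : mat p q) (r : R) : Prop :=
  exists v : vec q, norm v <= 1 /\ r = norm (mvmul A v).

Lemma opnorm_lub {p q} (A : mat p q) : is_lub (op_values A) (opnorm A).
Proof.
  unfold opnorm. apply epsilon_spec.
  destruct (completeness (op_values A)) as [c Hc].
  - exists (sqrt (frob A)). intros r [v [Hv ->]].
    pose proof (norm_mvmul_frob A v). pose proof (sqrt_pos (frob A)). nra.
  - exists (norm (mvmul A vzero)), vzero. rewrite norm_zero. split; [lra|reflexivity].
  - exists c; exact Hc.
Qed.

Lemma opnorm_nonneg {p q} (A : mat p q) : 0 <= opnorm A.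
Proof.
  destruct (opnorm_lub A) as [H _].
  apply Rle_trans with (norm (mvmul A vzero)); [apply norm_nonneg|].
  apply H. exists vzero. rewrite norm_zero. split; [lra|reflexivity].
Qed.

(* The defining property |A v| <= ||A|| |v|, obtained by rescaling v into the unit ball. *)
Lemma opnorm_bound {p q} (A : mat p q) v : norm (mvmul A v) <= opnorm A * norm v.
Proof.
  destruct (opnorm_lub A) as [H _].
  assert (K : forall l, 0 < l -> l * norm v <= 1 -> l * norm (mvmul A v) <= opnorm A).
  { intros l Hl Hn. apply H. exists (vscal l v).
    rewrite norm_scal, Rabs_pos_eq by lra. split; [exact Hn|].
    rewrite (norm_ext (mvmul A (vscal l v)) (vscal l (mvmul A v))) by (intros; apply mvmul_scal).
    rewrite norm_scal, Rabs_pos_eq; lra. }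
  pose proof (norm_nonneg v). pose proof (norm_nonneg (mvmul A v)).
  pose proof (opnorm_nonneg A).
  destruct (Req_dec (norm v) 0) as [Hz|Hz].
  - rewrite Hz, Rmult_0_r. destruct (Req_dec (norm (mvmul A v)) 0); [lra|].
    set (l := (opnorm A + 1) / norm (mvmul A v)).
    assert (Hl : 0 < l) by (apply Rdiv_lt_0_compat; lra).
    specialize (K l Hl ltac:(rewrite Hz; lra)).
    unfold l, Rdiv in K. rewrite Rmult_assoc, Rinv_l in K; lra.
  - specialize (K (/ norm v) ltac:(apply Rinv_0_lt_compat; lra) ltac:(rewrite Rinv_l; lra)).
    apply Rmult_le_compat_r with (r := norm v) in K; [|lra].
    rewrite Rmult_comm, <- Rmult_assoc, Rinv_r, Rmult_1_l in K; lra.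
Qed.

Lemma opnorm_le_frob {p q} (A : mat p q) : opnorm A <= sqrt (frob A).
Proof.
  destruct (opnorm_lub A) as [_ H]. apply H. intros r [v [Hv ->]].
  pose proof (norm_mvmul_frob A v). pose proof (sqrt_pos (frob A)). nra.
Qed.

Definition msub {p q} (A B : mat p q) : mat p q := fun i j => A i j - B i j.

Lemma opnorm_triangle {p q} (A B : mat p q) : opnorm A <= opnorm B + opnorm (msub A B).
Proof.
  destruct (opnorm_lub A) as [_ H]. apply H. intros r [v [Hv ->]].
  replace (norm (mvmul A v)) with (norm (vadd (mvmul B v) (mvmul (msub A B) v))).
  - eapply Rle_trans; [apply norm_triangle|].
    pose proof (opnorm_bound B v). pose proof (opnorm_bound (msub A B) v).
    pose proof (opnorm_nonneg B). pose proof (opnorm_nonneg (msub A B)).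
    pose proof (norm_nonneg v). nra.
  - apply norm_ext. intros i. unfold vadd, mvmul, msub. rewrite <- fsum_add.
    apply fsum_ext; intros; ring.
Qed.

Lemma opnorm_lipschitz {p q} (A B : mat p q) : Rabs (opnorm A - opnorm B) <= sqrt (frob (msub A B)).
Proof.
  pose proof (opnorm_triangle A B). pose proof (opnorm_triangle B A).
  pose proof (opnorm_le_frob (msub A B)). pose proof (opnorm_le_frob (msub B A)).
  replace (frob (msub B A)) with (frob (msub A B)) in *.
  - apply Rabs_le; lra.
  - unfold frob, dot, msub. apply fsum_ext; intros; apply fsum_ext; intros; ring.
Qed.

(* [rcont c s0]: c is continuous at s0 relative to the half-line [0,oo); this
   is the regularity the hypotheses provide at t = 0 for solutions. *)
Definition rcont (c : R -> R) (s0 : R) : Prop :=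
  forall eps, 0 < eps -> exists del, 0 < del /\
    forall s, 0 <= s -> Rabs (s - s0) < del -> Rabs (c s - c s0) < eps.

Lemma rcont_limit c s0 : rcont c s0 <-> limit1_in c (fun s => 0 <= s) (c s0) s0.
Proof.
  unfold rcont, limit1_in, limit_in; simpl; unfold R_dist.
  split; intros H eps Heps; destruct (H eps Heps) as [d [Hd H']];
    exists d; split; auto; intros; apply H'; tauto.
Qed.

Lemma rcont_plus c d s0 : rcont c s0 -> rcont d s0 -> rcont (fun s => c s + d s) s0.
Proof. rewrite !rcont_limit; intros; apply limit_plus; auto. Qed.

Lemma rcont_minus c d s0 : rcont c s0 -> rcont d s0 -> rcont (fun s => c s - d s) s0.
Proof. rewrite !rcont_limit; intros; apply limit_minus; auto. Qed.

Lemma rcont_mult c d s0 : rcont c s0 -> rcont d s0 -> rcont (fun s => c s * d s) s0.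
Proof. rewrite !rcont_limit; intros; apply limit_mul; auto. Qed.

Lemma rcont_const k s0 : rcont (fun _ => k) s0.
Proof. intros e He; exists 1; split; [lra|]; intros; rewrite Rminus_diag, Rabs_R0; lra. Qed.

Lemma continuity_rcont c s0 : continuity_pt c s0 -> rcont c s0.
Proof.
  unfold continuity_pt, continue_in, limit1_in, limit_in, D_x, no_cond; simpl; unfold R_dist.
  intros H eps Heps. destruct (H eps Heps) as [d [Hd K]]. exists d; split; auto.
  intros s Hs Hsd. destruct (Req_dec s0 s); [subst; rewrite Rminus_diag, Rabs_R0; auto|].
  apply K; auto.
Qed.

Lemma fin_common_radius k (P : Fin.t k -> R -> Prop) :
  (forall i d d', 0 < d' <= d -> P i d -> P i d') ->
  (forall i, exists d, 0 < d /\ P i d) -> exists d, 0 < d /\ forall i, P i d.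
Proof.
  induction k; intros Hmono H.
  - exists 1; split; [lra|]. intros i; inversion i.
  - destruct (IHk (fun i => P (Fin.FS i))) as [d1 [Hd1 H1]];
      [intros; eapply Hmono; eauto | intros; apply H |].
    destruct (H Fin.F1) as [d0 [Hd0 H0]].
    pose proof (Rmin_l d0 d1). pose proof (Rmin_r d0 d1).
    assert (0 < Rmin d0 d1) by (apply Rmin_pos; auto).
    exists (Rmin d0 d1); split; [assumption|].
    intros i; pattern i; apply Fin.caseS'.
    + eapply Hmono; [|apply H0]. lra.
    + intros i'; eapply Hmono; [|apply H1]. lra.
Qed.

Lemma dot_small {k} (u : vec k) eta :
  0 <= eta -> (forall i, Rabs (u i) < eta) -> dot u u <= INR k * (eta * eta).
Proof.
  intros He H. apply fsum_const_le. intros i. specialize (H i).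
  pose proof (Rabs_pos (u i)).
  replace (u i * u i) with (Rabs (u i) * Rabs (u i)) by (rewrite <- Rabs_mult, Rabs_pos_eq; nra).
  nra.
Qed.

Lemma frob_small {p q} (A : mat p q) eta :
  0 <= eta -> (forall i j, Rabs (A i j) < eta) -> frob A <= INR p * (INR q * (eta * eta)).
Proof. intros He H. apply fsum_const_le. intros i. apply dot_small; auto. Qed.

Lemma sqrt_lt_of_lt_sq x e : 0 < e -> x < e * e -> sqrt x < e.
Proof.
  intros He Hx. destruct (Rle_lt_dec x 0).
  - rewrite sqrt_neg_0 by lra; exact He.
  - rewrite <- (sqrt_square e) by lra. apply sqrt_lt_1_alt; lra.
Qed.

Lemma scaled_square_lt N eps : 0 <= N -> 0 < eps ->
  N * ((eps / (N + 1)) * (eps / (N + 1))) < eps * eps.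
Proof.
  intros HN He. set (eta := eps / (N + 1)).
  assert (Heta : 0 < eta) by (apply Rdiv_lt_0_compat; lra).
  assert (E : eps = eta * (N + 1)) by (unfold eta; field; lra).
  clearbody eta. subst eps. assert (0 < eta * eta) by nra. nra.
Qed.

Definition rcontp {n m} (p : R -> pt n m) (s0 : R) : Prop :=
  forall eps, 0 < eps -> exists del, 0 < del /\
    forall s, 0 <= s -> Rabs (s - s0) < del -> ptnorm (ptsub (p s) (p s0)) < eps.

Lemma rcontp_of_components {n m} (p : R -> pt n m) s0 :
  (forall i, rcont (fun s => fst (p s) i) s0) -> (forall i, rcont (fun s => snd (p s) i) s0) ->
  rcontp p s0.
Proof.
  intros H1 H2 eps Heps.
  pose proof (pos_INR n). pose proof (pos_INR m).
  set (eta := eps / (INR n + INR m + 1)).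
  assert (Heta : 0 < eta) by (apply Rdiv_lt_0_compat; lra).
  destruct (fin_common_radius n (fun i d => forall s, 0 <= s -> Rabs (s - s0) < d ->
      Rabs (fst (p s) i - fst (p s0) i) < eta)) as [d1 [Hd1 K1]].
  { intros i d d' Hd HP s Hs Hsd; apply HP; auto; lra. }
  { intros i; apply H1; auto. }
  destruct (fin_common_radius m (fun i d => forall s, 0 <= s -> Rabs (s - s0) < d ->
      Rabs (snd (p s) i - snd (p s0) i) < eta)) as [d2 [Hd2 K2]].
  { intros i d d' Hd HP s Hs Hsd; apply HP; auto; lra. }
  { intros i; apply H2; auto. }
  pose proof (Rmin_l d1 d2). pose proof (Rmin_r d1 d2).
  exists (Rmin d1 d2); split; [apply Rmin_pos; auto|]. intros s Hs Hsd.
  unfold ptnorm, ptsub; simpl. apply sqrt_lt_of_lt_sq; [exact Heps|].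
  pose proof (dot_small (vsub (fst (p s)) (fst (p s0))) eta ltac:(lra)
                ltac:(intros i; apply K1; auto; lra)).
  pose proof (dot_small (vsub (snd (p s)) (snd (p s0))) eta ltac:(lra)
                ltac:(intros i; apply K2; auto; lra)).
  pose proof (scaled_square_lt (INR n + INR m) eps ltac:(lra) Heps) as HS.
  fold eta in HS. lra.
Qed.

Lemma rcont_comp {n m} (U : pt n m -> Prop) (phi : pt n m -> R) (p : R -> pt n m) s0 :
  cont_on U phi -> (forall s, 0 <= s -> U (p s)) -> 0 <= s0 -> rcontp p s0 ->
  rcont (fun s => phi (p s)) s0.
Proof.
  intros Hc HU Hs0 Hp eps Heps.
  destruct (Hc (p s0) (HU s0 Hs0) eps Heps) as [d [Hd H]].
  destruct (Hp d Hd) as [d' [Hd' H']].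
  exists d'; split; [exact Hd'|]. intros s Hs Hsd. apply H; auto.
Qed.

Lemma rcont_opnorm {n m p q} (U : pt n m -> Prop) (M : pt n m -> mat p q) (pp : R -> pt n m) s0 :
  (forall i j, cont_on U (fun x => M x i j)) -> (forall s, 0 <= s -> U (pp s)) -> 0 <= s0 ->
  rcontp pp s0 -> rcont (fun s => opnorm (M (pp s))) s0.
Proof.
  intros Hc HU Hs0 Hp eps Heps.
  pose proof (pos_INR p). pose proof (pos_INR q).
  assert (HN : 0 <= INR p * INR q) by nra.
  set (eta := eps / (INR p * INR q + 1)).
  assert (Heta : 0 < eta) by (apply Rdiv_lt_0_compat; lra).
  destruct (fin_common_radius p (fun i d => forall j s, 0 <= s -> Rabs (s - s0) < d ->
      Rabs (M (pp s) i j - M (pp s0) i j) < eta)) as [d [Hd K]].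
  { intros i d d' Hd HP j s Hs Hsd; apply HP; auto; lra. }
  { intros i. apply (fin_common_radius q (fun j d => forall s, 0 <= s -> Rabs (s - s0) < d ->
      Rabs (M (pp s) i j - M (pp s0) i j) < eta)).
    - intros j d d' Hd HP s Hs Hsd; apply HP; auto; lra.
    - intros j. apply (rcont_comp U (fun x => M x i j) pp s0); auto. }
  exists d; split; [exact Hd|]. intros s Hs Hsd.
  eapply Rle_lt_trans; [apply opnorm_lipschitz|]. apply sqrt_lt_of_lt_sq; [exact Heps|].
  pose proof (frob_small (msub (M (pp s)) (M (pp s0))) eta ltac:(lra)
                ltac:(intros i j; apply K; auto)).
  pose proof (scaled_square_lt (INR p * INR q) eps HN Heps) as HS.
  fold eta in HS. nra.
Qed.

Lemma continuity_clamp (c : R -> R) :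
  (forall s0, 0 <= s0 -> rcont c s0) -> forall x, continuity_pt (fun s => c (Rmax 0 s)) x.
Proof.
  intros Hc x. unfold continuity_pt, continue_in, limit1_in, limit_in; simpl; unfold R_dist.
  intros eps Heps.
  destruct (Hc _ (Rmax_l 0 x) eps Heps) as [d [Hd H]].
  exists d; split; [exact Hd|]. intros y [_ Hy]. apply H; [apply Rmax_l|].
  eapply Rle_lt_trans; [|exact Hy].
  unfold Rmax; repeat destruct Rle_dec; unfold Rabs; repeat destruct Rcase_abs; lra.
Qed.

Lemma rcont_integrable (c : R -> R) T :
  0 <= T -> (forall s0, 0 <= s0 -> rcont c s0) -> Riemann_integrable c 0 T.
Proof.
  intros HT Hc.
  apply Riemann_integrable_ext with (f := fun s => c (Rmax 0 s)).
  - intros x Hx. rewrite Rmin_left in Hx by lra. rewrite Rmax_right by lra. reflexivity.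
  - apply continuity_implies_RiemannInt; [exact HT|]. intros; apply continuity_clamp; auto.
Qed.

Lemma primitive_from_0 (c : R -> R) T (pr : Riemann_integrable c 0 T) :
  0 <= T -> (forall s, 0 <= s -> rcont c s) ->
  exists P : R -> R, P 0 = 0 /\ P T = RiemannInt pr /\
    forall x, 0 <= x <= T -> derivable_pt_lim P x (c x).
Proof.
  intros HT Hc.
  assert (Hce : forall x, 0 <= x <= T -> continuity_pt (fun s => c (Rmax 0 s)) x)
    by (intros; apply continuity_clamp; auto).
  exists (primitive HT (FTC_P1 HT Hce)). repeat split.
  - unfold primitive. destruct (Rle_dec 0 0) as [H00|N]; [|contradiction (N (Rle_refl 0))].
    destruct (Rle_dec 0 T); [|contradiction]. apply RiemannInt_P9.
  - unfold primitive. destruct (Rle_dec 0 T); [|contradiction].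
    destruct (Rle_dec T T) as [HTT|N]; [|contradiction (N (Rle_refl T))].
    symmetry. apply RiemannInt_P18; [exact HT|].
    intros x Hx. rewrite Rmax_right by lra. reflexivity.
  - intros x Hx. pose proof (@RiemannInt_P28 _ _ _ x HT Hce Hx) as D.
    cbv beta in D. rewrite Rmax_right in D by lra. exact D.
Qed.

Lemma nondecreasing_of_deriv_nonneg (M dM : R -> R) T :
  0 <= T -> rcont M 0 ->
  (forall x, 0 < x <= T -> derivable_pt_lim M x (dM x)) ->
  (forall x, 0 < x <= T -> 0 <= dM x) -> M 0 <= M T.
Proof.
  intros HT HM Hd Hpos.
  destruct (Req_dec T 0) as [->|HT0]; [lra|].
  assert (Hmono : forall e, 0 < e < T -> M e <= M T).
  { intros e He.
    destruct (MVT_cor2 M dM e T) as [xi [Hxi1 Hxi2]]; [lra | intros; apply Hd; lra |].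
    specialize (Hpos xi ltac:(lra)). nra. }
  destruct (Rle_dec (M 0) (M T)) as [G|G]; [exact G|exfalso].
  destruct (HM (M 0 - M T) ltac:(lra)) as [d [Hd0 K]].
  pose proof (Rmin_l (d / 2) (T / 2)). pose proof (Rmin_r (d / 2) (T / 2)).
  assert (0 < Rmin (d / 2) (T / 2)) by (apply Rmin_pos; lra).
  set (e := Rmin (d / 2) (T / 2)) in *.
  specialize (K e ltac:(lra) ltac:(rewrite Rminus_0_r, Rabs_pos_eq; lra)).
  specialize (Hmono e ltac:(lra)). apply Rabs_def2 in K. lra.
Qed.

(* Lower Gronwall inequality: if h' >= k c h on (0,oo) then
   h(T) >= h(0) exp (k int_0^T c).  Proof: h exp(-k int_0^s c) is nondecreasing. *)
Lemma gronwall_lower (c h dh : R -> R) (k T : R) (pr : Riemann_integrable c 0 T) :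
  0 <= T -> (forall s, 0 <= s -> rcont c s) -> rcont h 0 ->
  (forall s, 0 < s -> derivable_pt_lim h s (dh s)) ->
  (forall s, 0 < s -> dh s >= k * c s * h s) ->
  h T >= h 0 * exp (k * RiemannInt pr).
Proof.
  intros HT Hc Hh Hd Hdi.
  destruct (primitive_from_0 c T pr HT Hc) as [P [P0 [PT dP]]].
  set (E := fun s => exp (- (k * P s))).
  assert (dE : forall x, 0 <= x <= T -> derivable_pt_lim E x (E x * (- (k * c x)))).
  { intros x Hx. apply (derivable_pt_lim_comp (fun s => - (k * P s)) exp x).
    - apply (derivable_pt_lim_opp (fun s => k * P s)), derivable_pt_lim_scal, dP, Hx.
    - apply derivable_pt_lim_exp. }
  assert (Hmono : h 0 * E 0 <= h T * E T).
  { apply (nondecreasing_of_deriv_nonneg (fun s => h s * E s)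
             (fun x => dh x * E x + h x * (E x * (- (k * c x)))) T HT).
    - apply rcont_mult; [exact Hh|]. apply continuity_rcont, derivable_continuous_pt.
      exists (E 0 * (- (k * c 0))). apply dE; lra.
    - intros x Hx. apply derivable_pt_lim_mult; [apply Hd; lra | apply dE; lra].
    - intros x Hx. specialize (Hdi x ltac:(lra)). pose proof (exp_pos (- (k * P x))).
      unfold E. nra. }
  unfold E in Hmono. rewrite P0, PT, Rmult_0_r, Ropp_0, exp_0, Rmult_1_r in Hmono.
  replace (h T) with (h T * exp (- (k * RiemannInt pr)) * exp (k * RiemannInt pr)).
  - apply Rle_ge, Rmult_le_compat_r; [left; apply exp_pos | exact Hmono].
  - rewrite Rmult_assoc, <- exp_plus, Rplus_opp_l, exp_0. ring.
Qed.

Lemma derivable_dot_self {k} (u : R -> vec k) (du : vec k) s :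
  (forall i, derivable_pt_lim (fun r => u r i) s (du i)) ->
  derivable_pt_lim (fun r => dot (u r) (u r)) s (2 * dot (u s) du).
Proof.
  revert u du. induction k; intros u du H.
  - replace (2 * dot (u s) du) with 0 by (unfold dot; simpl; ring).
    apply derivable_pt_lim_const.
  - replace (2 * dot (u s) du)
      with (2 * (u s Fin.F1 * du Fin.F1)
            + 2 * dot (fun i => u s (Fin.FS i)) (fun i => du (Fin.FS i)))
      by (unfold dot; simpl; ring).
    apply (derivable_pt_lim_plus (fun r => u r Fin.F1 * u r Fin.F1)
             (fun r => dot (fun i => u r (Fin.FS i)) (fun i => u r (Fin.FS i)))).
    + replace (2 * (u s Fin.F1 * du Fin.F1))
        with (du Fin.F1 * u s Fin.F1 + u s Fin.F1 * du Fin.F1) by ring.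
      apply derivable_pt_lim_mult; apply H.
    + apply (IHk (fun r i => u r (Fin.FS i)) (fun i => du (Fin.FS i))). intros; apply H.
Qed.

Lemma rcont_dot_self {k} (u : R -> vec k) s0 :
  (forall i, rcont (fun r => u r i) s0) -> rcont (fun r => dot (u r) (u r)) s0.
Proof.
  revert u. induction k; intros u H.
  - exact (rcont_const 0 s0).
  - apply (rcont_plus (fun r => u r Fin.F1 * u r Fin.F1)
             (fun r => dot (fun i => u r (Fin.FS i)) (fun i => u r (Fin.FS i)))).
    + apply rcont_mult; apply H.
    + apply (IHk (fun r i => u r (Fin.FS i))). intros; apply H.
Qed.

Lemma energy_lower {n m} (A : mat n n) (B : mat n m) (al : R) (a : vec n) (z : vec m) :
  dot a (mvmul A a) >= al * norm a ^ 2 ->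
  dot a (vadd (mvmul A a) (mvmul B z)) >= al * norm a ^ 2 - opnorm B * norm a * norm z.
Proof.
  intros HA. rewrite dot_add_r.
  pose proof (cauchy_schwarz a (mvmul B z)). pose proof (opnorm_bound B z).
  pose proof (norm_nonneg a). pose proof (Rle_abs (- dot a (mvmul B z))).
  rewrite Rabs_Ropp in *. nra.
Qed.

Lemma energy_upper {n m} (C : mat m n) (D : mat m m) (l : R) (a : vec n) (z : vec m) :
  dot z (mvmul D z) <= l * norm z ^ 2 ->
  dot z (vadd (mvmul C a) (mvmul D z)) <= opnorm C * norm a * norm z + l * norm z ^ 2.
Proof.
  intros HD. rewrite dot_add_r.
  pose proof (cauchy_schwarz z (mvmul C a)). pose proof (opnorm_bound C a).
  pose proof (norm_nonneg z). pose proof (Rle_abs (dot z (mvmul C a))). nra.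
Qed.

(* Rate of |a|^2 - |z|^2: under alpha >= ell + K1 + K2 the energy estimates give
   a lower bound proportional to |a|^2 - |z|^2 itself, since the remainder is
   (K1 + K2)(|a| - |z|)^2 + 2 (alpha - ell - K1 - K2) |a|^2 >= 0. *)
Lemma cone_rate_inequality na nz al l K1 K2 d1 d2 :
  0 <= K1 -> 0 <= K2 -> al >= l + K1 + K2 ->
  d1 >= al * na ^ 2 - K1 * na * nz -> d2 <= K2 * na * nz + l * nz ^ 2 ->
  2 * d1 - 2 * d2 >= (K1 + K2 + 2 * l) * (na ^ 2 - nz ^ 2).
Proof.
  intros HK1 HK2 Hal Hd1 Hd2.
  assert (0 <= (K1 + K2) * ((na - nz) * (na - nz)))
    by (apply Rmult_le_pos; [lra | apply Rle_0_sqr]).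
  assert (0 <= (al - l - K1 - K2) * (na * na))
    by (apply Rmult_le_pos; [lra | apply Rle_0_sqr]).
  nra.
Qed.

Lemma growth_rate_inequality na nz al K1 d1 :
  0 <= nz <= na -> 0 <= K1 -> d1 >= al * na ^ 2 - K1 * na * nz ->
  2 * d1 >= 2 * (al - K1) * na ^ 2.
Proof.
  intros Hn HK1 Hd1.
  assert (K1 * (na * nz) <= K1 * (na * na)) by (apply Rmult_le_compat_l; nra).
  nra.
Qed.

Section LinearConeSystem.

Variables n m : nat.
Variables (a : R -> vec n) (z : R -> vec m).
Variables (A : R -> mat n n) (B : R -> mat n m) (C : R -> mat m n) (D : R -> mat m m).
Variables (alpha ell : R -> R).

Hypothesis a_rcont0 : forall i, rcont (fun s => a s i) 0.
Hypothesis z_rcont0 : forall i, rcont (fun s => z s i) 0.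
Hypothesis a_deriv : forall i s, 0 < s ->
  derivable_pt_lim (fun r => a r i) s (vadd (mvmul (A s) (a s)) (mvmul (B s) (z s)) i).
Hypothesis z_deriv : forall i s, 0 < s ->
  derivable_pt_lim (fun r => z r i) s (vadd (mvmul (C s) (a s)) (mvmul (D s) (z s)) i).

Hypothesis A_coercive : forall s u, 0 < s -> dot u (mvmul (A s) u) >= alpha s * norm u ^ 2.
Hypothesis D_bounded : forall s u, 0 < s -> dot u (mvmul (D s) u) <= ell s * norm u ^ 2.
Hypothesis dominance : forall s, 0 < s -> alpha s >= ell s + opnorm (B s) + opnorm (C s).

(* Regularity of the coefficients, needed for the integrals to make sense. *)
Hypothesis alpha_rcont : forall s, 0 <= s -> rcont alpha s.
Hypothesis ell_rcont : forall s, 0 <= s -> rcont ell s.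
Hypothesis B_rcont : forall s, 0 <= s -> rcont (fun r => opnorm (B r)) s.
Hypothesis C_rcont : forall s, 0 <= s -> rcont (fun r => opnorm (C r)) s.

Let da (s : R) : vec n := vadd (mvmul (A s) (a s)) (mvmul (B s) (z s)).
Let dz (s : R) : vec m := vadd (mvmul (C s) (a s)) (mvmul (D s) (z s)).

Lemma sqnorm_a_deriv s : 0 < s ->
  derivable_pt_lim (fun r => dot (a r) (a r)) s (2 * dot (a s) (da s)).
Proof. intros Hs. apply derivable_dot_self. intros i; apply a_deriv, Hs. Qed.

Lemma sqnorm_z_deriv s : 0 < s ->
  derivable_pt_lim (fun r => dot (z r) (z r)) s (2 * dot (z s) (dz s)).
Proof. intros Hs. apply derivable_dot_self. intros i; apply z_deriv, Hs. Qed.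

Lemma cone_invariant : norm (z 0) <= norm (a 0) -> forall s, 0 <= s -> norm (z s) <= norm (a s).
Proof.
  intros H0 s Hs.
  set (c := fun r => opnorm (B r) + opnorm (C r) + 2 * ell r).
  assert (Hc : forall r, 0 <= r -> rcont c r).
  { intros r Hr. apply rcont_plus; [apply rcont_plus; auto|].
    apply rcont_mult; [apply rcont_const | auto]. }
  (* Gronwall for h = |a|^2 - |z|^2 with the rate c given by [cone_rate_inequality]. *)
  pose proof (gronwall_lower c (fun r => dot (a r) (a r) - dot (z r) (z r))
                (fun r => 2 * dot (a r) (da r) - 2 * dot (z r) (dz r)) 1 s
                (rcont_integrable c s Hs Hc) Hs Hc) as G.
  assert (Hrate : forall r, 0 < r -> 2 * dot (a r) (da r) - 2 * dot (z r) (dz r)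
                   >= 1 * c r * (dot (a r) (a r) - dot (z r) (z r))).
  { intros r Hr. rewrite Rmult_1_l, <- !norm_sq. apply cone_rate_inequality with (alpha r);
      [apply opnorm_nonneg | apply opnorm_nonneg | apply dominance, Hr
      | apply energy_lower, A_coercive, Hr | apply energy_upper, D_bounded, Hr]. }
  specialize (G (rcont_minus _ _ 0 (rcont_dot_self a 0 a_rcont0) (rcont_dot_self z 0 z_rcont0))).
  specialize (G ltac:(intros r Hr; apply derivable_pt_lim_minus;
                        [apply sqnorm_a_deriv | apply sqnorm_z_deriv]; exact Hr) Hrate).
  cbv beta in G.
  assert (Hh0 : 0 <= dot (a 0) (a 0) - dot (z 0) (z 0)).
  { rewrite <- !norm_sq. pose proof (norm_nonneg (z 0)). nra. }
  pose proof (exp_pos (1 * RiemannInt (rcont_integrable c s Hs Hc))).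
  assert (Hsq : norm (z s) ^ 2 <= norm (a s) ^ 2) by (rewrite !norm_sq; nra).
  pose proof (norm_nonneg (z s)). pose proof (norm_nonneg (a s)). nra.
Qed.

Lemma cone_growth : norm (z 0) <= norm (a 0) ->
  forall t (pr : Riemann_integrable (fun s => alpha s - opnorm (B s)) 0 t), 0 <= t ->
  norm (a t) >= norm (a 0) * exp (RiemannInt pr).
Proof.
  intros H0 t pr Ht.
  assert (Hc : forall r, 0 <= r -> rcont (fun s => alpha s - opnorm (B s)) r)
    by (intros; apply rcont_minus; auto).
  assert (Hrate : forall r, 0 < r -> 2 * dot (a r) (da r)
                   >= 2 * (alpha r - opnorm (B r)) * dot (a r) (a r)).
  { intros r Hr. rewrite <- norm_sq.
    apply growth_rate_inequality with (nz := norm (z r));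
      [split; [apply norm_nonneg | apply cone_invariant; lra]
      | apply opnorm_nonneg | apply energy_lower, A_coercive, Hr]. }
  (* Gronwall for |a|^2 with rate 2 (alpha - ||B||), then take square roots. *)
  pose proof (gronwall_lower _ (fun r => dot (a r) (a r)) (fun r => 2 * dot (a r) (da r)) 2 t pr
                Ht Hc (rcont_dot_self a 0 a_rcont0) sqnorm_a_deriv Hrate) as G.
  cbv beta in G. rewrite <- !norm_sq in G.
  replace (exp (2 * RiemannInt pr)) with (exp (RiemannInt pr) * exp (RiemannInt pr)) in G
    by (rewrite <- exp_plus; f_equal; ring).
  pose proof (exp_pos (RiemannInt pr)).
  pose proof (norm_nonneg (a t)). pose proof (norm_nonneg (a 0)). nra.
Qed.

End LinearConeSystem.

Lemma rcontp_of_solution {n m} (y : R -> pt n m) (V : R -> pt n m -> pt n m) :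
  solves_pos y V -> forall s, 0 <= s -> rcontp y s.
Proof.
  intros [H1 [H2 _]] s Hs.
  apply rcontp_of_components; intros i; [exact (H1 i s Hs) | exact (H2 i s Hs)].
Qed.

Lemma cone_at_origin {n m} (v : pt n m) : Cone ptzero v -> norm (Piperp v) <= norm (Pi v).
Proof.
  unfold Cone, Lf, ptzero, Pi, Piperp; cbn [fst snd]. rewrite !norm_zero_sub. intros Hv.
  pose proof (norm_nonneg (fst v)). pose proof (norm_nonneg (snd v)). nra.
Qed.

Theorem lemma2p5 (n m : nat)
  (f : pt n m -> vec n) (g : pt n m -> vec m)
  (Daf : pt n m -> mat n n) (Dzf : pt n m -> mat n m)
  (Dag : pt n m -> mat m n) (Dzg : pt n m -> mat m m)
  (U Gamma : pt n m -> Prop) (alpha ell : pt n m -> R) (c1 : R)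
  (Phi : R -> pt n m -> pt n m) (Q : R -> pt n m -> pt n m -> pt n m) :
  (* Hypothesis 1 *)
  X_open U -> X_convex U ->
  (exists d, 0 < d /\ forall x, U x -> forall x', Cone x x' -> U x' -> Ball d x x') ->
  (* Hypothesis 2 *)
  C1_on U f g Daf Dzf Dag Dzg ->
  cont_on U alpha -> cont_on U ell ->
  (forall x, U x -> 0 < alpha x) -> (forall x, U x -> 0 <= ell x) -> 0 < c1 ->
  (forall x, U x -> forall a' : vec n, dot a' (mvmul (Daf x) a') >= alpha x * (norm a')^2) ->
  (forall x, U x -> forall z' : vec m, dot z' (mvmul (Dzg x) z') <= ell x * (norm z')^2) ->
  (forall x, U x -> alpha x >= ell x + opnorm (Dzf x) + opnorm (Dag x) + c1) ->
  (* Phi is the flow of x' = F(x) (for t >= 0, starting in Gamma) *)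
  (forall x, Gamma x -> Phi 0 x = x /\ solves_pos (fun s => Phi s x) (fun _ p => Fld f g p)) ->
  (* Hypothesis 3 *)
  (forall x, Gamma x -> U x) ->
  (forall x, Gamma x -> forall t, 0 <= t -> Gamma (Phi t x)) ->
  (forall z : vec m, (exists a, Gamma (a, z)) <-> (exists a, U (a, z))) ->
  (* Q(t,x) is the fundamental matrix of x' = DF(Phi(t,x)) x, Q(0,x) = I,
     represented by its action v |-> Q(t,x) v *)
  (forall x, Gamma x -> forall v : pt n m,
     Q 0 x v = v /\ solves_pos (fun s => Q s x v) (fun s w => DF Daf Dzf Dag Dzg (Phi s x) w)) ->
  (* Conclusion *)
  forall x, Gamma x -> forall v : pt n m, Cone ptzero v ->
  forall t, 0 <= t ->
    exists pr : Riemann_integrable (fun s => alpha (Phi s x) - opnorm (Dzf (Phi s x))) 0 t,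
      norm (Pi (Q t x v)) >= norm (Pi v) * exp (RiemannInt pr).
Proof.
  intros _ _ _ HC1 Halpha Hell _ _ Hc1 Hcoer Hdzg Hdom Hflow HGU HGinv _ HQ x Gx v Hv t Ht.
  destruct HC1 as [_ [_ [Cdzf [Cdag _]]]].
  assert (Hon : forall s, 0 <= s -> U (Phi s x)) by (intros; apply HGU, HGinv; auto).
  pose proof (rcontp_of_solution _ _ (proj2 (Hflow x Gx))) as Horbit.
  assert (Hcoef : forall (phi : pt n m -> R), cont_on U phi ->
                    forall s, 0 <= s -> rcont (fun r => phi (Phi r x)) s)
    by (intros phi Hphi s Hs; apply (rcont_comp U); auto).
  assert (Hop : forall p q (M : pt n m -> mat p q), (forall i j, cont_on U (fun y => M y i j)) ->
                  forall s, 0 <= s -> rcont (fun r => opnorm (M (Phi r x))) s)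
    by (intros p q M HM s Hs; apply (rcont_opnorm U); auto).
  exists (rcont_integrable _ t Ht
            (fun s Hs => rcont_minus _ _ s (Hcoef alpha Halpha s Hs) (Hop _ _ Dzf Cdzf s Hs))).
  destruct (HQ x Gx v) as [HQ0 [Hq1 [Hq2 [Hq3 Hq4]]]].
  pose proof (cone_at_origin v Hv) as Hcone0. rewrite <- HQ0 in Hcone0 at 1 2.
  unfold Pi. rewrite <- HQ0 at 2.
  (* Q(s,x)v = (a(s), z(s)) solves the cone system whose coefficients are
     D_a f, D_z f, D_a g, D_z g evaluated at Phi(s,x). *)
  apply (cone_growth n m (fun s => fst (Q s x v)) (fun s => snd (Q s x v))
           (fun s => Daf (Phi s x)) (fun s => Dzf (Phi s x)) (fun s => Dag (Phi s x))
           (fun s => Dzg (Phi s x)) (fun s => alpha (Phi s x)) (fun s => ell (Phi s x)));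
    [ exact (fun i => Hq1 i 0 (Rle_refl 0)) | exact (fun i => Hq2 i 0 (Rle_refl 0))
    | exact Hq3 | exact Hq4 | | | | exact (Hcoef alpha Halpha) | exact (Hcoef ell Hell)
    | exact (Hop _ _ Dzf Cdzf) | exact (Hop _ _ Dag Cdag) | exact Hcone0 | exact Ht ].
  (* Hypothesis 2 holds along the orbit, with c1 > 0 only strengthening the dominance. *)
  - intros s u Hs; apply Hcoer, Hon; lra.
  - intros s u Hs; apply Hdzg, Hon; lra.
  - intros s Hs; pose proof (Hdom _ (Hon s ltac:(lra))); lra.
Qed.
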